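(* Let $p,q$ be positive integers with $p+q$ odd. For all $n\ge1$: (a) $y_n,[p]_n,[q]_n\in\mathcal{J}^{p,q}_n$; (b) $\psi_n(y_n)=1$, $\psi_n([p]_n)=p$, $\psi_n([q]_n)=q$ in $\mathbb{Z}_{2^{\lfloor n/2\rfloor}}$; (c) $\Delta_n(y_n)=(0,p-q)$, $\Delta_n([p]_n)=(1,p(p-q))$, $\Delta_n([q]_n)=(1,q(p-q))$ in $D_{2^{\lfloor n/2\rfloor+1}}$ (integers reduced modulo $2^{\lfloor n/2\rfloor}$).
   Context: Let $p,q$ be positive integers with $p+q$ odd. $\mathbb{Z}_{2^k}$ denotes the integers modulo $2^k$ ($\mathbb{Z}_1$ trivial); as $p+q$ is odd, division by $p+q$ and $(p+q)^2$ is well defined in $\mathbb{Z}_{2^k}$. For $m\ge1$, $D_{2m}$ is the dihedral group of order $2m$, realized as pairs $(f,x)$, $f\in\mathbb{Z}_2$, $x\in\mathbb{Z}_m$, with product $(f_1,x_1)(f_2,x_2)=(f_1+f_2,x_1+(-1)^{f_1}x_2)$. Define $\Phi:D_{2m}\to D_{2m}$, $\Phi((f,x))=(f,\delta(f=1)(p+q)(p-q)-x)$, where $\delta(f=1)$ is $1$ if $f=1$ and $0$ otherwise. $\mathrm{Aut}(T_1)$ is the trivial group $\{e\}$; for $k\ge1$, $\mathrm{Aut}(T_{k+1})$ is the set of triples $g=(g_f,g_L,g_R)$, $g_f\in\mathbb{Z}_2$, $g_L,g_R\in\mathrm{Aut}(T_k)$, with product $(f,A,B)(g,C,D)=(f+g,AC,BD)$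 if $f=0$ and $(f+g,AD,BC)$ if $f=1$; subscripts chain ($g_{LR}=(g_L)_R$, $g_{Lf}=(g_L)_f$). Recursively: $\mathcal{J}_1=\mathrm{Aut}(T_2)$, $\psi_1=0$, $\Delta_1(g)=(g_f,0)$; $\mathcal{J}_2=\{g\in\mathrm{Aut}(T_3):g_L=g_R\}$, $\psi_2(g)=\delta(g_{Lf}=1)\in\mathbb{Z}_2$, $\Delta_2(g)=(g_f,\psi_2(g))$; for $n\ge3$, $\mathcal{J}_n=\{g\in\mathrm{Aut}(T_{n+1}):g_L,g_R\in\mathcal{J}_{n-1},\ \Delta_{n-1}(g_L)=\Phi(\Delta_{n-1}(g_R))\}$, with $\psi_n:\mathcal{J}_n\to\mathbb{Z}_{2^{\lfloor n/2\rfloor}}$ given by $\psi_n(g)=(\psi_{n-1}(g_L)+\psi_{n-1}(g_R))/(p+q)$ for odd $n$ and $\psi_n(g)=\big(2(\psi_{n-2}(g_{LL})+\psi_{n-2}(g_{RL}))-\delta(g_{Lf}=1)(p+q)(p-q)\big)/(p+q)^2$ for even $n$ (with $2\psi_{n-2}(\cdot)$ read in $\mathbb{Z}_{2^{n/2}}$), and $\Delta_n:\mathcal{J}_n\to D_{2^{\lfloor n/2\rfloor+1}}$ given by $\Delta_n(g)=(g_f,\psi_{n-1}(g_L)-\psi_{n-1}(g_R))$ for odd $n$ and $\Delta_n(g)=(g_f,(p+q)\psi_n(g)-2\psi_{n-1}(g_R))$ for even $n$. Elements $[p]_n,[q]_n\in\mathrm{Aut}(T_{n+1})$: $[p]_1=[q]_1=(1,e,e)$,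 and for $n\ge2$, $[p]_n=(1,[p]_{n-1}^{\,p},[q]_{n-1}^{\,p})$, $[q]_n=(1,[p]_{n-1}^{\,q},[q]_{n-1}^{\,q})$ (powers in $\mathrm{Aut}(T_n)$). Also $y_n=(0,[p]_{n-1},[q]_{n-1})$ for $n\ge2$, and $y_1=(0,e,e)$ is the identity of $\mathrm{Aut}(T_2)$. *)

From mathcomp Require Import all_boot all_order all_algebra.
Unset Printing Implicit Defensive.
Import Order.TTheory GRing.Theory Num.Theory.
Local Open Scope ring_scope.

(* autT k = Aut(T_{k+1}):  autT 0 = Aut(T_1) = {e},
   autT (k+1) = Aut(T_{k+2}) = triples (g_f, g_L, g_R), g_f : Z_2 (= bool). *)
Fixpoint autT (k : nat) : Type :=
  match k with
  | 0 => unit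
  | k'.+1 => (bool * autT k' * autT k')%type
  end.

Definition af {k : nat} (g : autT k.+1) : bool := g.1.1.
Definition aL {k : nat} (g : autT k.+1) : autT k := g.1.2.
Definition aR {k : nat} (g : autT k.+1) : autT k := g.2.

Fixpoint amul (k : nat) : autT k -> autT k -> autT k :=
  match k return autT k -> autT k -> autT k with
  | 0 => fun _ _ => tt
  | k'.+1 => fun x y =>
      let: (f, A, B) := x in
      let: (g, C, D) := y in
      (addb f g,
       if f then amul k' A D else amul k' A C,
       if f then amul k' B C else amul k' B D)
  end.

Fixpoint aone (k : nat) : autT k :=
  match k return autT k with
  | 0 => tt
  | k'.+1 => (false, aone k', aone k')
  end.

Definition apow (k : nat) (x : autT k) (m : nat) : autT k :=
  iter m (amul k x) (aone k).

(* Z_{2^k}: elements represented by integer representatives;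
   md k x = canonical representative of x in [0, 2^k). *)
Definition md (k : nat) (x : int) : int := (x %% (2 ^ k)%:Z)%Z.

(* division a / b in Z_{2^k} (b odd): the unique x in [0,2^k) with x*b = a mod 2^k *)
Definition dv (k : nat) (a b : int) : int :=
  if [pick x : 'I_(2 ^ k) | ((2 ^ k)%:Z %| x%:Z * b - a)%Z] is Some x
  then x%:Z else 0.

Definition delta (b : bool) : int := if b then 1 else 0.

(* psi_n : J_n -> Z_{2^{floor(n/2)}}, extended to all of Aut(T_{n+1}).
   Values are canonical representatives in [0, 2^{floor(n/2)}). *)
Fixpoint psi (p q : nat) (n : nat) {struct n} : autT n -> int :=
  match n return autT n -> int with
  | 0 => fun _ => 0
  | S n1 =>
    match n1 as m return (autT m -> int) -> autT m.+1 -> int with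
    | 0 => fun _ _ => 0
    | S n2 => fun psi_n1 =>
      match n2 as m return (autT m -> int) -> (autT m.+1 -> int) -> autT m.+2 -> int with
      | 0 => fun _ _ g => delta (af (aL g))
      | S n3 => fun psi_n2 psi_n1 g =>
          if odd n3.+3 then
            dv (n3.+3)./2 (psi_n1 (aL g) + psi_n1 (aR g)) (p + q)%:Z
          else
            dv (n3.+3)./2
               (2 * (psi_n2 (aL (aL g)) + psi_n2 (aL (aR g)))
                - delta (af (aL g)) * (p + q)%:Z * (p%:Z - q%:Z))
               ((p + q)%:Z ^+ 2)
      end (psi p q n2) psi_n1
    end (psi p q n1)
  end.

(* D_{2m} elements (f, x), f : Z_2, x : Z_m, with x given by a representative *)
Definition nD (k : nat) (d : bool * int) : bool * int := (d.1, md k d.2).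

Definition Phi (p q : nat) (k : nat) (d : bool * int) : bool * int :=
  (d.1, md k (delta d.1 * (p + q)%:Z * (p%:Z - q%:Z) - d.2)).

(* Delta_n : J_n -> D_{2^{floor(n/2)+1}}, extended to all of Aut(T_{n+1}) *)
Definition Delta (p q : nat) (n : nat) : autT n -> bool * int :=
  match n return autT n -> bool * int with
  | 0 => fun _ => (false, 0)
  | 1 => fun g => (af g, 0)
  | 2 => fun g => (af g, psi p q 2 g)
  | S (S (S k as k1) as k2) => fun g =>
      if odd k2.+1 then
        (af g, md (k2.+1)./2 (psi p q k2 (aL g) - psi p q k2 (aR g)))
      else
        (af g, md (k2.+1)./2 ((p + q)%:Z * psi p q k2.+1 g
                              - 2 * psi p q k2 (aR g)))
  end.

(* membership in J_n (J_0 is not defined in the paper; junk value True) *)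
Fixpoint inJ (p q : nat) (n : nat) {struct n} : autT n -> Prop :=
  match n return autT n -> Prop with
  | 0 => fun _ => True
  | S n1 =>
    match n1 as m return (autT m -> Prop) -> autT m.+1 -> Prop with
    | 0 => fun _ _ => True
    | S n2 => fun inJ_n1 =>
      match n2 as m return (autT m.+1 -> Prop) -> autT m.+2 -> Prop with
      | 0 => fun _ g => aL g = aR g
      | S n3 => fun inJ_n1 g =>
          [/\ inJ_n1 (aL g), inJ_n1 (aR g) &
              nD (n3.+2)./2 (Delta p q n3.+2 (aL g))
              = Phi p q (n3.+2)./2 (Delta p q n3.+2 (aR g))]
      end inJ_n1
    end (inJ p q n1)
  end.

(* ([p]_n, [q]_n) in Aut(T_{n+1}); index 0 is a junk value *)
Fixpoint pq (p q : nat) (n : nat) {struct n} : autT n * autT n :=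
  match n return autT n * autT n with
  | 0 => (tt, tt)
  | S n1 =>
    match n1 as m return autT m * autT m -> autT m.+1 * autT m.+1 with
    | 0 => fun _ => ((true, tt, tt), (true, tt, tt))
    | S n2 => fun r =>
        ((true, apow _ r.1 p, apow _ r.2 p), (true, apow _ r.1 q, apow _ r.2 q))
    end (pq p q n1)
  end.

Definition brp (p q n : nat) : autT n := (pq p q n).1.
Definition brq (p q n : nat) : autT n := (pq p q n).2.

Definition yy (p q n : nat) : autT n :=
  match n return autT n with
  | 0 => tt
  | 1 => (false, tt, tt)
  | S (S k as k1) => (false, brp p q k1, brq p q k1)
  end.

From Pilot Require Import Defs.
From mathcomp Require Import all_boot all_order all_algebra.
From mathcomp Require Import ring.
Import Order.TTheory GRing.Theory Num.Theory.
Set Implicit Arguments. Unset Strict Implicit.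
Local Open Scope ring_scope.

(* J_n is a subgroup of Aut(T_{n+1}) on which psi_n and Delta_n are homomorphisms,
   by a two-step induction on n: at even levels the membership condition, which
   says that Phi exchanges the Delta-values of the two children, compensates
   exactly for the children swapped by a flip at the root.  The three families
   of the theorem are all of the form (f, [p]_{n-1}^m, [q]_{n-1}^m), namely
   y_n for (f, m) = (0, 1) and [p]_n, [q]_n for (1, p), (1, q); for these the
   homomorphism property reduces the claims psi_n = m and Delta_n = (f, m(p-q))
   to the previous levels.  At even levels one also needs that, when x has
   flip 1, the left child of x^m has the psi-value of x_L^ceil(m/2) x_R^floor(m/2). *)

Definition eqm (k : nat) (a b : int) := ((2 ^ k)%N%:Z %| a - b)%Z.

Section Congruence.

Variable k : nat.

Lemma eqm_md a b : md k a = md k b <-> eqm k a b.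
Proof. by rewrite /eqm /md -eqz_mod_dvd; split => [-> | /eqP]. Qed.

Lemma md_eqm a : eqm k (md k a) a.
Proof. by apply/eqm_md; rewrite /md modz_mod. Qed.

Lemma eqm_refl a : eqm k a a.
Proof. by rewrite /eqm subrr dvdz0. Qed.

Lemma eqm_sym a b : eqm k a b -> eqm k b a.
Proof. by rewrite /eqm -opprB rpredN. Qed.

Lemma eqm_diff a b c d : eqm k c d -> a - b = c - d -> eqm k a b.
Proof. by rewrite /eqm => ? ->. Qed.

Lemma eqmD a b c d : eqm k a b -> eqm k c d -> eqm k (a + c) (b + d).
Proof.
by rewrite /eqm (_ : a + c - (b + d) = (a - b) + (c - d)); [exact: rpredD | ring].
Qed.

Lemma eqmB a b c d : eqm k a b -> eqm k c d -> eqm k (a - c) (b - d).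
Proof.
by rewrite /eqm (_ : a - c - (b - d) = (a - b) - (c - d)); [exact: rpredB | ring].
Qed.

Lemma eqm_trans a b c : eqm k a b -> eqm k b c -> eqm k a c.
Proof. by move=> hab hbc; apply: (eqm_diff (eqmD hab hbc)); ring. Qed.

Lemma eqmMl c a b : eqm k a b -> eqm k (c * a) (c * b).
Proof. by rewrite /eqm -mulrBr; apply: dvdz_mull. Qed.

Lemma eqm2 a b : eqm k a b -> eqm k.+1 (2 * a) (2 * b).
Proof. by rewrite /eqm expnS PoszM -mulrBr dvdz_mul2l. Qed.

Lemma eqmW a b : eqm k.+1 a b -> eqm k a b.
Proof. by apply: dvdz_trans; rewrite expnS PoszM dvdz_mull. Qed.

Lemma coprime_pow2 c : odd c -> coprimez (2 ^ k)%N%:Z c%:Z.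
Proof. by move=> oc; rewrite coprimezE !absz_nat coprimeXl // coprime2n. Qed.

Lemma eqm_cancel c x y : odd c -> eqm k (x * c%:Z) (y * c%:Z) -> eqm k x y.
Proof. by move=> oc; rewrite /eqm -mulrBl Gauss_dvdzl // coprime_pow2. Qed.

Lemma dv_spec a c : odd c -> eqm k (dv k a c%:Z * c%:Z) a.
Proof.
move=> oc; rewrite /dv; case: pickP => [x // | no_sol]; exfalso.
have [[u v] /= uv1] := coprimezP _ _ (coprime_pow2 oc).
have M_gt0 : 0 < (2 ^ k)%N%:Z by rewrite ltz_nat expn_gt0.
pose y := md k (a * v).
have y_ge0 : 0 <= y by rewrite modz_ge0 // gt_eqF.
have y_lt : (`|y| < 2 ^ k)%N by rewrite -ltz_nat gez0_abs // ltz_pmod.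
have := no_sol (Ordinal y_lt); rewrite /= gez0_abs // => /negbT/negP; apply.
suff : eqm k (y * c%:Z) (a * (u * (2 ^ k)%N%:Z + v * c%:Z)) by rewrite uv1 mulr1.
rewrite /eqm (_ : _ - _ = (y - a * v) * c%:Z - (a * u) * (2 ^ k)%N%:Z); last by ring.
by apply: rpredB; [apply: dvdz_mulr; exact: md_eqm | exact: dvdz_mull].
Qed.

End Congruence.

Lemma eqm0 a b : eqm 0 a b.
Proof. by rewrite /eqm expn0 dvd1z. Qed.

Lemma eqm1_double x : eqm 1 (2 * x) 0.
Proof. by rewrite /eqm subr0 expn1 dvdz_mulr. Qed.

Lemma eqm1_odd m : eqm 1 (delta (odd m)) m%:Z.
Proof.
apply: (eqm_diff (eqm_sym (eqm1_double (m./2)%:Z))).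
by rewrite -{2}(odd_double_half m) PoszD -muln2 PoszM; case: (odd m); rewrite /delta /=; ring.
Qed.

Lemma delta_addb a b : delta (a (+) b) = delta a + delta b - 2 * delta a * delta b.
Proof. by case: a; case: b; rewrite /delta /=; ring. Qed.

Definition dmul (d e : bool * int) : bool * int :=
  (d.1 (+) e.1, d.2 + (if d.1 then - e.2 else e.2)).

Definition deq (k : nat) (d e : bool * int) := d.1 = e.1 /\ eqm k d.2 e.2.

Definition PhiZ (p q : nat) (d : bool * int) : bool * int :=
  (d.1, delta d.1 * (p + q)%:Z * (p%:Z - q%:Z) - d.2).

Section Dihedral.

Variables (p q k : nat).

Lemma nD_eq d e : nD k d = nD k e <-> deq k d e.
Proof.
by case: d e => [f x] [g y]; rewrite /nD /deq /=; split=> [[-> /eqm_md] | [-> /eqm_md ->]].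
Qed.

Lemma Phi_nD d : Phi p q k d = nD k (PhiZ p q d).
Proof. by []. Qed.

Lemma deq_sym d e : deq k d e -> deq k e d.
Proof. by case=> h1 h2; split; [rewrite h1 | apply: eqm_sym]. Qed.

Lemma deq_trans d e f : deq k d e -> deq k e f -> deq k d f.
Proof. by case=> h1 h2 [h3 h4]; split; [rewrite h1 | apply: eqm_trans h4]. Qed.

Lemma dmul_deq d d' e e' : deq k d d' -> deq k e e' -> deq k (dmul d e) (dmul d' e').
Proof.
case: d d' e e' => [f x] [_ x'] [g y] [_ y'] [/= <- hx] [/= <- hy]; split => //=.
by apply: eqmD => //; case: f => //; apply: (eqm_diff (eqm_sym hy)); ring.
Qed.

Lemma PhiZ_deq d e : deq k d e -> deq k (PhiZ p q d) (PhiZ p q e).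
Proof. by case: d e => [f x] [g y] [/= <- h]; split => //=; apply: (eqm_diff (eqm_sym h)); ring. Qed.

Lemma PhiZ_dmul d e : PhiZ p q (dmul d e) = dmul (PhiZ p q d) (PhiZ p q e).
Proof. by case: d e => [[] x] [[] y]; rewrite /PhiZ /dmul /delta /=; congr pair; ring. Qed.

Lemma PhiZK d : PhiZ p q (PhiZ p q d) = d.
Proof. by case: d => [f x]; rewrite /PhiZ /=; congr pair; ring. Qed.

End Dihedral.

Section TreeAutomorphisms.

Variable n : nat.

Lemma amulE f a b e c d : amul n.+1 (f, a, b) (e, c, d) =
  (f (+) e, if f then amul n a d else amul n a c, if f then amul n b c else amul n b d).
Proof. by []. Qed.

Lemma aoneS : aone n.+1 = (false, aone n, aone n).
Proof. by []. Qed.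

Lemma af_mul (g h : autT n.+1) : af (amul n.+1 g h) = af g (+) af h.
Proof. by case: g h => [[f a] b] [[e c] d]. Qed.

Lemma aL_mul (g h : autT n.+1) :
  aL (amul n.+1 g h) = amul n (aL g) (if af g then aR h else aL h).
Proof. by case: g h => [[[] a] b] [[e c] d]. Qed.

Lemma aR_mul (g h : autT n.+1) :
  aR (amul n.+1 g h) = amul n (aR g) (if af g then aL h else aR h).
Proof. by case: g h => [[[] a] b] [[e c] d]. Qed.

Lemma apow0 x : apow n x 0 = aone n.
Proof. by []. Qed.

Lemma apowS x m : apow n x m.+1 = amul n x (apow n x m).
Proof. by []. Qed.

End TreeAutomorphisms.

Lemma amulg1 n x : amul n x (aone n) = x.
Proof.
elim: n x => [[] // | n IH [[f a] b]].
by rewrite aoneS amulE !IH; case: f.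
Qed.

Lemma apow1 n x : apow n x 1 = x.
Proof. exact: amulg1. Qed.

Lemma af_pow n (x : autT n.+1) m : af (apow n.+1 x m) = af x && odd m.
Proof. by elim: m => [| m IH]; rewrite ?apowS ?af_mul ?IH //=; case: (af x). Qed.

Arguments amul : simpl never.
Arguments aone : simpl never.
Arguments apow : simpl never.

Lemma half_double_add2 t : (t.*2.+2)./2 = t.+1.
Proof. by rewrite /= half_double. Qed.

Lemma half_double_add3 t : (t.*2.+3)./2 = t.+1.
Proof. by rewrite /= uphalf_double. Qed.

Lemma half_double_add4 t : (t.*2.+4)./2 = t.+2.
Proof. by rewrite /= half_double. Qed.

Lemma nat_ind2 (P : nat -> Prop) :
  P 0 -> P 1 -> (forall n, P n -> P n.+1 -> P n.+2) -> forall n, P n.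
Proof.
move=> P0 P1 PSS n; suff [] : P n /\ P n.+1 by [].
by elim: n => [| n [Pn PSn]]; split=> //; apply: PSS.
Qed.

Lemma psiSSS p q n (g : autT n.+3) : psi p q n.+3 g =
  if odd n.+3 then dv (n.+3)./2 (psi p q n.+2 (aL g) + psi p q n.+2 (aR g)) (p + q)%:Z
  else dv (n.+3)./2 (2 * (psi p q n.+1 (aL (aL g)) + psi p q n.+1 (aL (aR g)))
                     - delta (af (aL g)) * (p + q)%:Z * (p%:Z - q%:Z)) ((p + q)%:Z ^+ 2).
Proof. by []. Qed.

Lemma DeltaSSS p q n (g : autT n.+3) : Delta p q n.+3 g =
  if odd n.+3 then (af g, md (n.+3)./2 (psi p q n.+2 (aL g) - psi p q n.+2 (aR g)))
  else (af g, md (n.+3)./2 ((p + q)%:Z * psi p q n.+3 g - 2 * psi p q n.+2 (aR g))).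
Proof. by []. Qed.

Arguments psi : simpl never.
Arguments Delta : simpl never.
Arguments inJ : simpl never.

Section SubgroupJ.

Variables p q : nat.
Hypothesis pq_odd : odd (p + q).

Local Notation P := (p + q)%:Z.
Local Notation Q := (p%:Z - q%:Z).
Local Notation J := (inJ p q).
Local Notation psi := (Defs.psi p q).
Local Notation Delta := (Defs.Delta p q).

Lemma psi_2 (g : autT 2) : psi 2 g = delta (af (aL g)).
Proof. by []. Qed.

Lemma Delta_1 (g : autT 1) : Delta 1 g = (af g, 0).
Proof. by []. Qed.

Lemma Delta_2 (g : autT 2) : Delta 2 g = (af g, delta (af (aL g))).
Proof. by []. Qed.

Lemma inJ_2 (g : autT 2) : J 2 g <-> aL g = aR g.
Proof. by []. Qed.

Definition Jkids n (x : autT n.+1) := J n (aL x) /\ J n (aR x).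

Lemma inJSSS n (g : autT n.+3) : J n.+3 g <->
  Jkids g /\ deq (n.+2)./2 (Delta n.+2 (aL g)) (PhiZ p q (Delta n.+2 (aR g))).
Proof.
split=> [[JL JR D] | [[JL JR] D]]; first by split=> //; apply/nD_eq; rewrite -Phi_nD.
by split=> //; rewrite Phi_nD; apply/nD_eq.
Qed.

Lemma inJ_kids n (g : autT n.+3) : J n.+3 g -> Jkids g.
Proof. by case/inJSSS. Qed.

Lemma psi_oddP t (g : autT t.*2.+3) :
  eqm t.+1 (psi t.*2.+3 g * P) (psi t.*2.+2 (aL g) + psi t.*2.+2 (aR g)).
Proof. by rewrite psiSSS /= odd_double uphalf_double; apply: dv_spec. Qed.

Lemma Delta_odd t (g : autT t.*2.+3) :
  deq t.+1 (Delta t.*2.+3 g) (af g, psi t.*2.+2 (aL g) - psi t.*2.+2 (aR g)).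
Proof. by rewrite DeltaSSS /= odd_double uphalf_double; split; last exact: md_eqm. Qed.

Definition psi_num n (g : autT n.+2) : int :=
  2 * (psi n (aL (aL g)) + psi n (aL (aR g))) - delta (af (aL g)) * P * Q.

Lemma odd_sq : odd ((p + q) ^ 2).
Proof. by rewrite oddX pq_odd orbT. Qed.

Lemma psi_evenP t (g : autT t.*2.+4) : eqm t.+2 (psi t.*2.+4 g * P ^+ 2) (psi_num g).
Proof.
have -> : P ^+ 2 = ((p + q) ^ 2)%N%:Z by ring.
by rewrite psiSSS /= odd_double half_double; apply: dv_spec odd_sq.
Qed.

Lemma Delta_even t (g : autT t.*2.+4) :
  deq t.+2 (Delta t.*2.+4 g) (af g, P * psi t.*2.+4 g - 2 * psi t.*2.+3 (aR g)).
Proof. by rewrite DeltaSSS /= odd_double half_double; split; last exact: md_eqm. Qed.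

Definition J_hom n := J n (aone n) /\ forall g h, J n g -> J n h ->
  [/\ J n (amul n g h), eqm n./2 (psi n (amul n g h)) (psi n g + psi n h)
    & deq n./2 (Delta n (amul n g h)) (dmul (Delta n g) (Delta n h))].

Section Homomorphism.

Variables (n : nat) (Hn : J_hom n).

Lemma psi_one : eqm n./2 (psi n (aone n)) 0.
Proof.
have [_ e _] := Hn.2 _ _ Hn.1 Hn.1; rewrite amulg1 in e.
by apply: (eqm_diff (eqm_sym e)); ring.
Qed.

Lemma Delta_one : deq n./2 (Delta n (aone n)) (false, 0).
Proof.
have [_ _ [f2 e]] := Hn.2 _ _ Hn.1 Hn.1; rewrite amulg1 in f2 e.
case: (Delta n (aone n)) f2 e => [[] x] //= _ e; split=> //=.
by apply: (eqm_diff (eqm_sym e)); ring.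
Qed.

Lemma J_pow x m : J n x -> J n (apow n x m).
Proof.
move=> Jx; elim: m => [| m IH]; first exact: Hn.1.
by rewrite apowS; have [] := Hn.2 _ _ Jx IH.
Qed.

Lemma psi_pow x m : J n x -> eqm n./2 (psi n (apow n x m)) (m%:Z * psi n x).
Proof.
move=> Jx; elim: m => [| m IH]; first by apply: (eqm_diff psi_one); ring.
have [_ e _] := Hn.2 _ _ Jx (J_pow m Jx).
by rewrite apowS; apply: (eqm_diff (eqm_trans e (eqmD (eqm_refl _ _) IH))); ring.
Qed.

Lemma Delta_pow x m c : J n x -> deq n./2 (Delta n x) (true, c) ->
  deq n./2 (Delta n (apow n x m)) (if odd m then (true, c) else (false, 0)).
Proof.
move=> Jx Dx; elim: m => [| m IH]; first exact: Delta_one.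
have [_ _ D] := Hn.2 _ _ Jx (J_pow m Jx).
rewrite apowS; apply: deq_trans D (deq_trans (dmul_deq Dx IH) _).
by rewrite /=; case: (odd m); split=> //=; apply: (eqm_diff (eqm_refl _ 0)); ring.
Qed.

Lemma children_mul (x y : autT n.+1) : Jkids x -> Jkids y ->
  [/\ Jkids (amul n.+1 x y),
      eqm n./2 (psi n (aL (amul n.+1 x y)))
        (psi n (aL x) + psi n (aL y) - delta (af x) * (psi n (aL y) - psi n (aR y))) &
      eqm n./2 (psi n (aR (amul n.+1 x y)))
        (psi n (aR x) + psi n (aR y) + delta (af x) * (psi n (aL y) - psi n (aR y)))].
Proof.
move=> [JxL JxR] [JyL JyR]; rewrite /Jkids aL_mul aR_mul.
have Jy1 : J n (if af x then aR y else aL y) by case: (af x).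
have Jy2 : J n (if af x then aL y else aR y) by case: (af x).
have [J1 e1 _] := Hn.2 _ _ JxL Jy1; have [J2 e2 _] := Hn.2 _ _ JxR Jy2.
by split=> //; [apply: (eqm_diff e1) | apply: (eqm_diff e2)];
  case: (af x); rewrite /delta; ring.
Qed.

Lemma children_pow (x : autT n.+1) m : af x -> Jkids x ->
  [/\ Jkids (apow n.+1 x m),
      eqm n./2 (psi n (aL (apow n.+1 x m)))
        ((uphalf m)%:Z * psi n (aL x) + (m./2)%:Z * psi n (aR x)) &
      eqm n./2 (psi n (aR (apow n.+1 x m)))
        ((m./2)%:Z * psi n (aL x) + (uphalf m)%:Z * psi n (aR x))].
Proof.
move=> fx Jx; elim: m => [| m [Jm eL eR]].
  by rewrite apow0 aoneS /=; split; [split; exact: Hn.1 | |]; apply: (eqm_diff psi_one); ring.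
have [J' e1 e2] := children_mul Jx Jm; rewrite fx /delta in e1 e2.
rewrite apowS; split=> //.
  by apply: (eqm_diff (eqmD e1 eR)); rewrite /=; ring.
by apply: (eqm_diff (eqmD e2 eL)); rewrite /=; ring.
Qed.

End Homomorphism.

Lemma J_hom1 : J_hom 1.
Proof.
split=> // g h _ _; split=> //; rewrite !Delta_1 af_mul.
by split=> //; apply: eqm0.
Qed.

Lemma J_hom2 : J_hom 2.
Proof.
split=> [| [[f a] b] [[e c] d] /inJ_2 /= <- /inJ_2 /= <-]; first exact/inJ_2.
rewrite amulE !if_same !psi_2 !Delta_2 /aL /= af_mul delta_addb.
have two_ac := eqm1_double (delta (@af 0 a) * delta (@af 0 c)).
split; first exact/inJ_2.
  by apply: (eqm_diff (eqm_sym two_ac)); ring.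
split=> //=; case: f => /=.
  have two_c := eqm1_double (delta (@af 0 c) - delta (@af 0 a) * delta (@af 0 c)).
  by apply: (eqm_diff two_c); ring.
by apply: (eqm_diff (eqm_sym two_ac)); ring.
Qed.

Lemma J_oneSSS n : J_hom n.+2 -> J n.+3 (aone n.+3).
Proof.
move=> Hn; apply/inJSSS; rewrite aoneS; split; first by split; exact: Hn.1.
apply: deq_trans (Delta_one Hn) (deq_trans _ (PhiZ_deq p q (deq_sym (Delta_one Hn)))).
by split=> //=; apply: (eqm_diff (eqm_refl _ 0)); rewrite /delta; ring.
Qed.

Lemma J_mulSSS n g h : J_hom n.+2 -> J n.+3 g -> J n.+3 h -> J n.+3 (amul n.+3 g h).
Proof.
move=> Hn /inJSSS [[JgL JgR] Dg] /inJSSS [[JhL JhR] Dh].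
have Dh' : deq (n.+2)./2 (Delta n.+2 (aR h)) (PhiZ p q (Delta n.+2 (aL h))).
  by rewrite -[Delta _ (aR h)](PhiZK p q); apply/PhiZ_deq/deq_sym.
have Jh1 : J n.+2 (if af g then aR h else aL h) by case: (af g).
have Jh2 : J n.+2 (if af g then aL h else aR h) by case: (af g).
have Dh12 : deq (n.+2)./2 (Delta n.+2 (if af g then aR h else aL h))
                          (PhiZ p q (Delta n.+2 (if af g then aL h else aR h))).
  by case: (af g).
have [J1 _ D1] := Hn.2 _ _ JgL Jh1; have [J2 _ D2] := Hn.2 _ _ JgR Jh2.
apply/inJSSS; split; first by rewrite /Jkids aL_mul aR_mul.
rewrite aL_mul aR_mul.
apply: deq_trans D1 (deq_trans (dmul_deq Dg Dh12) _).
by rewrite -PhiZ_dmul; apply/PhiZ_deq/deq_sym.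
Qed.

Lemma J_hom_odd t : J_hom t.*2.+2 -> J_hom t.*2.+3.
Proof.
move=> Hn; split=> [| g h Jg Jh]; first exact: J_oneSSS.
have [_ eL eR] := children_mul Hn (inJ_kids Jg) (inJ_kids Jh).
rewrite half_double_add2 in eL eR; rewrite half_double_add3.
split; first exact: J_mulSSS.
  apply: (eqm_cancel pq_odd).
  have e := eqmD (eqmB (eqmB (psi_oddP (amul _ g h)) (psi_oddP g)) (psi_oddP h)) (eqmD eL eR).
  by apply: (eqm_diff e); ring.
apply: deq_trans (Delta_odd _) (deq_trans _ (deq_sym (dmul_deq (Delta_odd g) (Delta_odd h)))).
rewrite af_mul; split=> //=; case: (af g) in eL eR *.
  by apply: (eqm_diff (eqmB eL eR)); rewrite /delta; ring.
by apply: (eqm_diff (eqmB eL eR)); rewrite /delta; ring.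
Qed.

Lemma J_even t (h : autT t.*2.+4) : J t.*2.+4 h ->
  [/\ Jkids h, af (aL h) = af (aR h) &
      eqm t.+1 ((psi t.*2.+2 (aL (aL h)) - psi t.*2.+2 (aR (aL h)))
                + (psi t.*2.+2 (aL (aR h)) - psi t.*2.+2 (aR (aR h))))
               (delta (af (aL h)) * P * Q)].
Proof.
case/inJSSS=> Jh; rewrite half_double_add3 => D.
have [/= fLR e] := deq_trans (deq_sym (Delta_odd _)) (deq_trans D (PhiZ_deq p q (Delta_odd _))).
by split=> //; rewrite fLR; apply: (eqm_diff e); ring.
Qed.

Lemma psi_num_mul t (g h : autT t.*2.+4) : J_hom t.*2.+2 -> J _ g -> J _ h ->
  eqm t.+2 (psi_num (amul _ g h)) (psi_num g + psi_num h).
Proof.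
move=> Hn Jg Jh; have [[JgL JgR] fg _] := J_even Jg; have [[JhL JhR] fh Sh] := J_even Jh.
have Jh1 : J t.*2.+3 (if af g then aR h else aL h) by case: (af g).
have Jh2 : J t.*2.+3 (if af g then aL h else aR h) by case: (af g).
have [_ e1 _] := children_mul Hn (inJ_kids JgL) (inJ_kids Jh1).
have [_ e2 _] := children_mul Hn (inJ_kids JgR) (inJ_kids Jh2).
rewrite half_double_add2 -fg in e1 e2.
(* The membership condition of h compensates for the swap of h's children. *)
have e := eqmD (eqm2 (eqmD e1 e2)) (eqm_sym (eqm2 (eqmMl (delta (af (aL g))) Sh))).
rewrite /psi_num aL_mul aR_mul af_mul delta_addb.
by move: e; case: (af g) => /= e; rewrite -?fh; apply: (eqm_diff e); ring.
Qed.

Lemma psi_even_mul t (g h : autT t.*2.+4) : J_hom t.*2.+2 -> J _ g -> J _ h ->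
  eqm t.+2 (psi _ (amul _ g h)) (psi _ g + psi _ h).
Proof.
move=> Hn Jg Jh; apply: (eqm_cancel odd_sq).
have e := eqmD (eqmB (eqmB (psi_evenP (amul _ g h)) (psi_evenP g)) (psi_evenP h))
               (psi_num_mul Hn Jg Jh).
by apply: (eqm_diff e); ring.
Qed.

Lemma psi_even_kids t (h : autT t.*2.+4) : J _ h ->
  eqm t.+1 (P * psi _ h) (psi t.*2.+3 (aL h) + psi t.*2.+3 (aR h)).
Proof.
case/J_even=> _ _ Sh; apply: (eqm_cancel pq_odd).
have e := eqmD (eqmB (eqmB (eqmW (psi_evenP h)) (psi_oddP (aL h))) (psi_oddP (aR h))) Sh.
by apply: (eqm_diff e); rewrite /psi_num; ring.
Qed.

Lemma J_hom_even t : J_hom t.*2.+2 -> J_hom t.*2.+3 -> J_hom t.*2.+4.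
Proof.
move=> H2 H3; split=> [| g h Jg Jh]; first exact: J_oneSSS.
have S := psi_even_mul H2 Jg Jh; have K := eqm2 (psi_even_kids Jh).
have [_ _ eR] := children_mul H3 (inJ_kids Jg) (inJ_kids Jh); rewrite half_double_add3 in eR.
rewrite half_double_add4; split; [exact: J_mulSSS | exact: S |].
apply: deq_trans (Delta_even _) (deq_trans _ (deq_sym (dmul_deq (Delta_even g) (Delta_even h)))).
rewrite af_mul; split=> //=; move: eR; case: (af g); rewrite /delta /= => eR.
  by apply: (eqm_diff (eqmD (eqmB (eqmMl P S) (eqm2 eR)) K)); ring.
by apply: (eqm_diff (eqmB (eqmMl P S) (eqm2 eR))); ring.
Qed.

Lemma J_homSS n : J_hom n.+1 -> J_hom n.+2 -> J_hom n.+3.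
Proof.
rewrite -[n]odd_double_half; case: (odd n) => /=; rewrite ?add1n ?add0n.
  exact: J_hom_even.
by move=> _; apply: J_hom_odd.
Qed.

Lemma J_homS n : J_hom n.+1.
Proof. by elim/nat_ind2: n => [| | n]; [exact: J_hom1 | exact: J_hom2 | exact: J_homSS]. Qed.

Definition pqpow f m n : autT n.+1 := (f, apow n (brp p q n) m, apow n (brq p q n) m).

Lemma brp_pqpow n : brp p q n.+2 = pqpow true p n.+1.
Proof. by []. Qed.

Lemma brq_pqpow n : brq p q n.+2 = pqpow true q n.+1.
Proof. by []. Qed.

Lemma yy_pqpow n : yy p q n.+2 = pqpow false 1 n.+1.
Proof. by rewrite /pqpow !apow1. Qed.

Lemma af_pqpow f m n : af (pqpow f m n) = f.
Proof. by []. Qed.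

Lemma pqpowL f m n : aL (pqpow f m n.+2) = apow n.+2 (pqpow true p n.+1) m.
Proof. by []. Qed.

Lemma pqpowR f m n : aR (pqpow f m n.+2) = apow n.+2 (pqpow true q n.+1) m.
Proof. by []. Qed.

Arguments pqpow : simpl never.

Definition pqpow_spec n := forall f m,
  [/\ J n.+1 (pqpow f m n), eqm (n.+1)./2 (psi n.+1 (pqpow f m n)) m%:Z
    & deq (n.+1)./2 (Delta n.+1 (pqpow f m n)) (f, m%:Z * Q)].

Lemma pqpow_spec1 : pqpow_spec 1.
Proof.
move=> f m; have eP : eqm 1 1 P by have := eqm1_odd (p + q); rewrite pq_odd.
rewrite psi_2 Delta_2 (_ : af (aL (pqpow f m 1)) = odd m); last by rewrite /pqpow /= af_pow.
split; [exact/inJ_2 | exact: eqm1_odd | split=> //=].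
have e := eqmD (eqmD (eqm1_odd m) (eqmMl m%:Z eP)) (eqm1_double (m%:Z * q%:Z)).
by apply: (eqm_diff e); ring.
Qed.

Lemma J_pqpow n f m : J_hom n.+2 -> pqpow_spec n.+1 -> J n.+3 (pqpow f m n.+2).
Proof.
move=> Hn G; have [Jp _ Dp] := G true p; have [Jq _ Dq] := G true q.
apply/inJSSS; rewrite /Jkids pqpowL pqpowR; split; first by split; apply: J_pow.
have Dpm := Delta_pow Hn m Jp Dp; have Dqm := Delta_pow Hn m Jq Dq.
apply: deq_trans Dpm (deq_trans _ (PhiZ_deq p q (deq_sym Dqm))).
by case: (odd m); split=> //=; apply: (eqm_diff (eqm_refl _ 0)); rewrite /delta; ring.
Qed.

Lemma psi_pqpow_kids n f m : J_hom n.+2 -> pqpow_spec n.+1 ->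
  eqm (n.+2)./2 (psi n.+2 (aL (pqpow f m n.+2))) (m%:Z * p%:Z) /\
  eqm (n.+2)./2 (psi n.+2 (aR (pqpow f m n.+2))) (m%:Z * q%:Z).
Proof.
move=> Hn G; have [Jp Pp _] := G true p; have [Jq Pq _] := G true q.
by rewrite pqpowL pqpowR; split; apply: eqm_trans (psi_pow Hn m _) (eqmMl _ _).
Qed.

Lemma psi_pqpow_powL n a m : J_hom n.+2 -> pqpow_spec n.+1 ->
  eqm (n.+2)./2 (psi n.+2 (aL (apow n.+3 (pqpow true a n.+2) m)))
      ((uphalf m)%:Z * (a%:Z * p%:Z) + (m./2)%:Z * (a%:Z * q%:Z)).
Proof.
move=> Hn G; have [eP eQ] := psi_pqpow_kids true a Hn G.
have [Jp _ _] := G true p; have [Jq _ _] := G true q.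
have Jk : Jkids (pqpow true a n.+2) by rewrite /Jkids pqpowL pqpowR; split; apply: J_pow.
have [_ eL _] := children_pow Hn m (isT : af (pqpow true a n.+2)) Jk.
exact: eqm_trans eL (eqmD (eqmMl _ eP) (eqmMl _ eQ)).
Qed.

Lemma pqpow_spec_odd t : pqpow_spec t.*2.+1 -> pqpow_spec t.*2.+2.
Proof.
move=> G f m; have Hn := J_homS t.*2.+1.
have [eP eQ] := psi_pqpow_kids f m Hn G; rewrite half_double_add2 in eP eQ.
rewrite half_double_add3; split; first exact: J_pqpow.
  apply: (eqm_cancel pq_odd).
  by apply: (eqm_diff (eqmD (psi_oddP (pqpow f m _)) (eqmD eP eQ))); ring.
apply: deq_trans (Delta_odd _) _; split=> //=.
by apply: (eqm_diff (eqmB eP eQ)); ring.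
Qed.

Lemma pqpow_spec_even t : pqpow_spec t.*2.+1 -> pqpow_spec t.*2.+2 -> pqpow_spec t.*2.+3.
Proof.
move=> G2 G3 f m; have H2 := J_homS t.*2.+1; have H3 := J_homS t.*2.+2.
have eP := psi_pqpow_powL p m H2 G2; have eQ := psi_pqpow_powL q m H2 G2.
rewrite half_double_add2 in eP eQ.
have PZ : eqm t.+2 (psi t.*2.+4 (pqpow f m t.*2.+3)) m%:Z.
  apply: (eqm_cancel odd_sq).
  apply: (eqm_diff (eqmD (psi_evenP (pqpow f m _)) (eqm2 (eqmD eP eQ)))).
  rewrite /psi_num pqpowL pqpowR af_pow af_pqpow /= uphalf_half.
  have -> : m%:Z = (odd m)%:Z + 2 * (m./2)%:Z by rewrite -{1}(odd_double_half m) -mul2n; ring.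
  by case: (odd m); rewrite /delta /=; ring.
have [_ eQ3] := psi_pqpow_kids f m H3 G3; rewrite half_double_add3 in eQ3.
rewrite half_double_add4; split; [exact: J_pqpow | exact: PZ |].
apply: deq_trans (Delta_even _) _; split=> //=.
by apply: (eqm_diff (eqmB (eqmMl P PZ) (eqm2 eQ3))); ring.
Qed.

Lemma pqpow_specSS n : pqpow_spec n.+1 -> pqpow_spec n.+2 -> pqpow_spec n.+3.
Proof.
rewrite -[n]odd_double_half; case: (odd n) => /=; rewrite ?add1n ?add0n.
  by move=> _; apply: (pqpow_spec_odd (t := _.+1)).
exact: pqpow_spec_even.
Qed.

Lemma pqpow_specS n : pqpow_spec n.+1.
Proof.
elim/nat_ind2: n => [| | n]; first exact: pqpow_spec1; last exact: pqpow_specSS.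
exact: (pqpow_spec_odd (t := 0)) pqpow_spec1.
Qed.

End SubgroupJ.

Unset Implicit Arguments.

Theorem theorem2 (p q : nat) (hp : (0 < p)%N) (hq : (0 < q)%N)
  (hpq : odd (p + q)) (n : nat) (hn : (1 <= n)%N) :
  [/\ inJ p q n (yy p q n), inJ p q n (brp p q n) & inJ p q n (brq p q n)] /\
  [/\ md n./2 (psi p q n (yy p q n)) = md n./2 1,
      md n./2 (psi p q n (brp p q n)) = md n./2 p%:Z &
      md n./2 (psi p q n (brq p q n)) = md n./2 q%:Z] /\
  [/\ nD n./2 (Delta p q n (yy p q n)) = (false, md n./2 (p%:Z - q%:Z)),
      nD n./2 (Delta p q n (brp p q n)) = (true, md n./2 (p%:Z * (p%:Z - q%:Z))) &
      nD n./2 (Delta p q n (brq p q n)) = (true, md n./2 (q%:Z * (p%:Z - q%:Z)))].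
Proof.
case: n hn => [// | [_ | n _]].
  by rewrite /md /nD /= expn0 !modz1.
rewrite yy_pqpow brp_pqpow brq_pqpow.
have [Jy Py Dy] := pqpow_specS hpq n false 1.
have [Jp Pp Dp] := pqpow_specS hpq n true p.
have [Jq Pq Dq] := pqpow_specS hpq n true q.
rewrite mul1r in Dy.
split; first by []; split; first by split; apply/eqm_md.
by split; [apply/(nD_eq _ _ (false, _)) | apply/(nD_eq _ _ (true, _)) ..].
Qed.
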